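(* Let $\tau,\ell,s$ be positive integers with $s\le\ell$ and $\tau+\ell m_{\mathrm H}<sn$. If Problem 1 (with parameters $s,\ell$) has a solution of degree $\tau$, then it has at least $(q^2)^{\delta(\tau)-1}$ solutions of degree $\tau$, where $$\delta(\tau)=(\tau+1)C_{\le\ell}-n\big[W_{<s}+sC_{\le\ell}-sC_{<s}\big]+m_{\mathrm H}W_{\le\ell}-gC_{\le\ell}.$$
   Context: Let $q$ be a prime power; the Hermitian curve over $\mathbb{F}_{q^2}$ has affine equation $Y^q+Y=X^{q+1}$, genus $g=\tfrac12q(q-1)$, affine rational points $P_1,\dots,P_n$ ($n=q^3$) and point at infinity $P_\infty$. $\mathcal{R}=\bigcup_{m\ge0}\mathcal{L}(mP_\infty)=\mathbb{F}_{q^2}[X,Y]/(Y^q+Y-X^{q+1})$ with basis $\{X^iY^j:i\ge0,0\le j<q\}$; $\deg_{\mathcal{H}}f=-v_{P_\infty}(f)$, so $\deg_{\mathcal{H}}(X^iY^j)=iq+j(q+1)$; $f\ne0$ is monic if the coefficient of its basis monomial of largest $\deg_{\mathcal{H}}$ is $1$. Fix integers $h\ge1$ and $m_{\mathrm H}$ with $2(g-1)<m_{\mathrm H}<n$. Given a received word $\mathbf{r}=(r_{i,j})\in\mathbb{F}_{q^2}^{h\times n}$, let $\mathbf{R}=(R_1,\dots,R_h)$, $R_i\in\mathcal{R}$, $\deg_{\mathcal{H}}R_i<n+2g$, $R_i(P_j)=r_{i,j}$; $G=X^{q^2}-X$. For $\mathbf{i},\mathbf{j}\in\mathbb{Z}_{\ge0}^h$: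 $|\mathbf{i}|=\sum_\mu i_\mu$, $\mathbf{i}\preceq\mathbf{j}$ componentwise, $\mathbf{a}^{\mathbf{i}}=\prod_\mu a_\mu^{i_\mu}$, $\binom{\mathbf{j}}{\mathbf{i}}=\prod_\mu\binom{j_\mu}{i_\mu}$. Problem 1: $\mathcal{I}=\{\mathbf{i}:|\mathbf{i}|<s\}$, $\mathcal{J}=\{\mathbf{j}:1\le|\mathbf{j}|\le\ell\}$, $A_{\mathbf{i},\mathbf{j}}=\binom{\mathbf{j}}{\mathbf{i}}\mathbf{R}^{\mathbf{j}-\mathbf{i}}G^{|\mathbf{i}|}$ ($=0$ if $\mathbf{i}\not\preceq\mathbf{j}$). A solution is a family $\lambda_{\mathbf{i}},\psi_{\mathbf{j}}\in\mathcal{R}$ with $\lambda_{\mathbf{0}}$ monic, $\psi_{\mathbf{j}}=\sum_{\mathbf{i}\in\mathcal{I}}\lambda_{\mathbf{i}}A_{\mathbf{i},\mathbf{j}}$ for $|\mathbf{j}|<s$, $\psi_{\mathbf{j}}\equiv\sum_{\mathbf{i}\in\mathcal{I}}\lambda_{\mathbf{i}}A_{\mathbf{i},\mathbf{j}}\bmod G^s$ for $|\mathbf{j}|\ge s$, $\deg_{\mathcal{H}}\lambda_{\mathbf{0}}\ge\deg_{\mathcal{H}}\lambda_{\mathbf{i}}-|\mathbf{i}|(2g-1)$ for all $\mathbf{i}\in\mathcal{I}$, and $\deg_{\mathcal{H}}\lambda_{\mathbf{0}}\ge\deg_{\mathcal{H}}\psi_{\mathbf{j}}-|\mathbf{j}|m_{\mathrm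 H}$ for all $\mathbf{j}\in\mathcal{J}$; its degree is $\deg_{\mathcal{H}}\lambda_{\mathbf{0}}$. Counting quantities: $C_{\le\ell}=\#\{\mathbf{j}\in\mathbb{Z}_{\ge0}^h:|\mathbf{j}|\le\ell\}$, $C_{<s}=\#\{\mathbf{i}\in\mathbb{Z}_{\ge0}^h:|\mathbf{i}|<s\}$, $W_{<s}=\sum_{|\mathbf{i}|<s}|\mathbf{i}|$, $W_{\le\ell}=\sum_{|\mathbf{j}|\le\ell}|\mathbf{j}|$ (sums over $\mathbb{Z}_{\ge0}^h$). *)

From HB Require Import structures.
From mathcomp Require Import all_boot all_order all_algebra.
Set Implicit Arguments. Unset Strict Implicit. Unset Printing Implicit Defensive.
Import Order.TTheory GRing.Theory Num.Theory.
Local Open Scope ring_scope.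

(* Elements of R = F[X,Y]/(Y^q+Y-X^{q+1}) are represented by bivariate
   polynomials p : {poly {poly F}}: the OUTER variable is Y, the inner one X,
   so the coefficient of X^i Y^j in p is (p`_j)`_i.  Canonical representatives
   (basis {X^i Y^j : j < q}) are the "reduced" ones: size p <= q. *)

Definition hX (F : fieldType) : {poly {poly F}} := ('X)%:P.
Definition hY (F : fieldType) : {poly {poly F}} := 'X.

Definition hermH (F : fieldType) (q : nat) : {poly {poly F}} :=
  hY F ^+ q + hY F - hX F ^+ q.+1.

Definition hermG (F : fieldType) (q : nat) : {poly {poly F}} :=
  hX F ^+ (q ^ 2)%N - hX F.

Definition genus (q : nat) : nat := (q * (q - 1)) %/ 2.

Definition coefH (F : fieldType) (p : {poly {poly F}}) (i j : nat) : F :=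
  (p`_j)`_i.

Definition wtH (q i j : nat) : nat := (i * q + j * q.+1)%N.

Definition reducedH (F : fieldType) (q : nat) (p : {poly {poly F}}) : Prop :=
  (size p <= q)%N.

(* deg_H p <= d  (always true for p = 0, whose degree is -infinity) *)
Definition degH_le (F : fieldType) (q : nat) (p : {poly {poly F}}) (d : int)
  : Prop :=
  forall i j : nat, coefH p i j != 0 -> ((wtH q i j)%:Z <= d)%R.

Definition degH (F : fieldType) (q : nat) (p : {poly {poly F}}) : nat :=
  (\max_(j < size p) \max_(i < size (p`_j)%R)
     (if coefH p i j != 0%R then wtH q i j else 0%N))%N.

Definition monicH (F : fieldType) (q : nat) (p : {poly {poly F}}) : Prop :=
  p != 0 /\
  forall i j : nat, coefH p i j != 0 -> wtH q i j = degH q p -> coefH p i j = 1.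

Definition eqR (F : fieldType) (q : nat) (a b : {poly {poly F}}) : Prop :=
  exists c, a - b = c * hermH F q.

Definition congR (F : fieldType) (q k : nat) (a b : {poly {poly F}}) : Prop :=
  exists c d, a - b = c * hermG F q ^+ k + d * hermH F q.

Definition evalH (F : fieldType) (p : {poly {poly F}}) (P : F * F) : F :=
  (p.[P.2%:P]).[P.1].

Definition on_curve (F : fieldType) (q : nat) (P : F * F) : Prop :=
  P.2 ^+ q + P.2 = P.1 ^+ q.+1.

(* multi-indices in Z_{>=0}^h with all entries <= l; every multi-index with
   |i| <= l (in particular |i| < s <= l) is of this form *)
Definition midx (h l : nat) := {ffun 'I_h -> 'I_l.+1}.

Definition msum (h l : nat) (i : midx h l) : nat := (\sum_mu (i mu : nat))%N.
Definition mzero (h l : nat) : midx h l := [ffun => ord0].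
Definition mle (h l : nat) (i j : midx h l) : bool :=
  [forall mu, (i mu <= j mu)%N].
Definition mbinom (h l : nat) (i j : midx h l) : nat :=
  (\prod_mu 'C(j mu, i mu))%N.

Definition Aij (F : fieldType) (q h l : nat) (Rv : 'I_h -> {poly {poly F}})
  (i j : midx h l) : {poly {poly F}} :=
  if mle i j then
    (mbinom i j)%:R * (\prod_mu Rv mu ^+ (j mu - i mu)) * hermG F q ^+ msum i
  else 0.

(* (lam, psi) is a solution of Problem 1 with parameters s, l, m_H.
   lam i is relevant for |i| < s, psi j for 1 <= |j| <= l. *)
Definition is_solution (F : fieldType) (q h mH l s : nat)
  (Rv : 'I_h -> {poly {poly F}}) (lam psi : midx h l -> {poly {poly F}})
  : Prop :=
  let g := genus q in
  let S j := \sum_(i : midx h l | (msum i < s)%N) lam i * Aij q Rv i j in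
  [/\ (forall i, (msum i < s)%N -> reducedH q (lam i)) /\
      (forall j, (1 <= msum j <= l)%N -> reducedH q (psi j)),
      monicH q (lam (mzero h l)),
      (forall j, (1 <= msum j < s)%N -> eqR q (psi j) (S j)) /\
      (forall j, (s <= msum j <= l)%N -> congR q s (psi j) (S j)),
      (forall i, (msum i < s)%N ->
        degH_le q (lam i) ((degH q (lam (mzero h l)))%:Z
                            + (msum i)%:Z * (2 * g%:Z - 1)))
    & (forall j, (1 <= msum j <= l)%N ->
        degH_le q (psi j) ((degH q (lam (mzero h l)))%:Z
                            + (msum j)%:Z * mH%:Z))].

Definition sol_degree (F : fieldType) (q h l : nat)
  (lam : midx h l -> {poly {poly F}}) : nat := degH q (lam (mzero h l)).

Definition Cle (h l : nat) : nat := #|[set j : midx h l | (msum j <= l)%N]|.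
Definition Clt (h l s : nat) : nat := #|[set i : midx h l | (msum i < s)%N]|.
Definition Wlt (h l s : nat) : nat :=
  (\sum_(i : midx h l | (msum i < s)%N) msum i)%N.
Definition Wle (h l : nat) : nat :=
  (\sum_(j : midx h l | (msum j <= l)%N) msum j)%N.

Definition delta (q h mH l s tau : nat) : int :=
  let n := (q ^ 3)%N in
  (tau.+1)%:Z * (Cle h l)%:Z
  - n%:Z * ((Wlt h l s)%:Z + s%:Z * (Cle h l)%:Z - s%:Z * (Clt h l s)%:Z)
  + mH%:Z * (Wle h l)%:Z - (genus q)%:Z * (Cle h l)%:Z.

From HB Require Import structures.
From mathcomp Require Import all_boot all_order all_algebra.
From mathcomp Require Import zify ring.
Import Order.TTheory GRing.Theory Num.Theory.
Set Implicit Arguments. Unset Strict Implicit. Unset Printing Implicit Defensive.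
Local Open Scope ring_scope.

(* Perturb a solution (lambda, psi) of degree tau by adding to every lambda_i
   (|i| < s) and every psi_j (s <= |j| <= l) an arbitrary combination of the
   monomials X^a Y^b (b < q) of weight within the bound of Problem 1 -- and
   below tau for lambda_0, which therefore stays monic of degree tau -- and by
   adding to psi_j (|j| < s) the reduction modulo H of sum_i lambda'_i A_ij.
   The result is again a solution as soon as finitely many linear forms vanish
   on the perturbation: the coefficients of these corrections of weight in
   (tau + |j| m_H, tau + |j| (n + 2g - 1)], and the remainders modulo
   (H, G^s) of psi'_j - sum_i lambda'_i A_ij.  The kernel of this linear map
   has at least (q^2)^(#unknowns - #equations) elements, and distinct kernel
   vectors give distinct solutions.  Counting with the Riemann-Roch bound
   (at least m + 1 - g monomials of weight <= m) gives
   #unknowns - #equations >= delta(tau) - 1, the -1 coming from the budget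
   tau - 1 of lambda_0. *)

(** * Weighted degree *)

Section WeightedDegree.
Variables (F : fieldType) (q : nat).
Implicit Types (p : {poly {poly F}}) (d : int).

Lemma coefH_ext p p' : (forall a b, coefH p a b = coefH p' a b) -> p = p'.
Proof. by move=> e; apply/polyP=> b; apply/polyP=> a; apply: e. Qed.

Lemma coefH0 a b : coefH (0 : {poly {poly F}}) a b = 0.
Proof. by rewrite /coefH !coef0. Qed.

Lemma coefHD p p' a b : coefH (p + p') a b = coefH p a b + coefH p' a b.
Proof. by rewrite /coefH !coefD. Qed.

Lemma coefHN p a b : coefH (- p) a b = - coefH p a b.
Proof. by rewrite /coefH !coefN. Qed.

Lemma coefHB p p' a b : coefH (p - p') a b = coefH p a b - coefH p' a b.
Proof. by rewrite coefHD coefHN. Qed.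

Lemma degH_le0 d : degH_le q (0 : {poly {poly F}}) d.
Proof. by move=> a b; rewrite coefH0 eqxx. Qed.

Lemma degH_leW p d d' : d <= d' -> degH_le q p d -> degH_le q p d'.
Proof. by move=> le_dd' le_pd a b /le_pd /le_trans; apply. Qed.

Lemma degH_leD p p' d :
  degH_le q p d -> degH_le q p' d -> degH_le q (p + p') d.
Proof.
move=> le_pd le_p'd a b; rewrite coefHD.
have [pab0|/le_pd //] := eqVneq (coefH p a b) 0.
by rewrite pab0 add0r => /le_p'd.
Qed.

Lemma degH_leN p d : degH_le q p d -> degH_le q (- p) d.
Proof. by move=> le_pd a b; rewrite coefHN oppr_eq0; apply: le_pd. Qed.

Lemma degH_leB p p' d :
  degH_le q p d -> degH_le q p' d -> degH_le q (p - p') d.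
Proof. by move=> le_pd /degH_leN; apply: degH_leD. Qed.

Lemma degH_le_sum (I : Type) (r : seq I) (P : pred I)
    (f : I -> {poly {poly F}}) d :
  (forall i, P i -> degH_le q (f i) d) ->
  degH_le q (\sum_(i <- r | P i) f i) d.
Proof.
move=> le_fd; elim/big_rec: _ => [|i y Pi le_yd]; first exact: degH_le0.
exact: degH_leD (le_fd _ Pi) le_yd.
Qed.

Lemma degH_leM p p' d d' :
  degH_le q p d -> degH_le q p' d' -> degH_le q (p * p') (d + d').
Proof.
move=> le_pd le_p'd' a b; rewrite /coefH coefM coef_sum.
case: (pickP (fun e : 'I_b.+1 => (p`_e * p'`_(b - e))`_a != 0)) => [e + _|none];
  last by rewrite big1 ?eqxx // => e _; apply/eqP/negbFE/none.
rewrite coefM; case: (pickP (fun c : 'I_a.+1 =>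
    p`_e`_c * p'`_(b - e)`_(a - c) != 0)) => [c + _|none];
  last by rewrite big1 ?eqxx // => c _; apply/eqP/negbFE/none.
rewrite mulf_eq0 negb_or => /andP[/le_pd le_ce /le_p'd' le_ace].
have le_eb : (e <= b)%N by rewrite -ltnS.
have le_ca : (c <= a)%N by rewrite -ltnS.
have -> : wtH q a b = (wtH q c e + wtH q (a - c) (b - e))%N by rewrite /wtH; nia.
by rewrite PoszD lerD.
Qed.

Lemma degH_le1 : degH_le q (1 : {poly {poly F}}) 0.
Proof.
move=> a b; rewrite /coefH coef1; case: (b =P 0) => [->|_]; last by rewrite coef0 eqxx.
by rewrite coef1; case: (a =P 0) => [->|_]; rewrite ?eqxx.
Qed.

Lemma degH_le_nat k : degH_le q (k%:R : {poly {poly F}}) 0.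
Proof.
elim: k => [|k IHk]; first exact: degH_le0.
by rewrite -addn1 natrD; apply: degH_leD IHk degH_le1.
Qed.

Lemma degH_le_prod (I : Type) (r : seq I) (P : pred I)
    (f : I -> {poly {poly F}}) (w : I -> int) :
  (forall i, P i -> degH_le q (f i) (w i)) ->
  degH_le q (\prod_(i <- r | P i) f i) (\sum_(i <- r | P i) w i).
Proof.
move=> le_fw; elim/big_rec2: _ => [|i y1 y2 Pi le_y]; first exact: degH_le1.
exact: degH_leM (le_fw _ Pi) le_y.
Qed.

Lemma degH_leX p d k : degH_le q p d -> degH_le q (p ^+ k) (k%:Z * d).
Proof.
move=> le_pd; elim: k => [|k IHk]; first by rewrite mul0r; apply: degH_le1.
by rewrite exprS -addn1 PoszD mulrDl mul1r addrC; apply: degH_leM.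
Qed.

Definition monoH (a b : nat) : {poly {poly F}} := ('X^a)%:P * 'X^b.

Lemma coefH_monoH a b a' b' :
  coefH (monoH a b) a' b' = ((b' == b) && (a' == a))%:R.
Proof.
by rewrite /coefH coefCM coefXn; case: eqP; rewrite ?mulr1 ?mulr0 ?coefXn ?coef0.
Qed.

Lemma degH_le_monoH a b : degH_le q (monoH a b) (wtH q a b)%:Z.
Proof.
move=> a' b'; rewrite coefH_monoH.
by case: (b' =P b) => [->|]; case: (a' =P a) => [->|] //=; rewrite eqxx.
Qed.

Lemma wtH_le_degH p a b : coefH p a b != 0 -> (wtH q a b <= degH q p)%N.
Proof.
move=> nz_ab.
have lt_b : (b < size p)%N.
  rewrite ltnNge; apply: contra nz_ab; rewrite /coefH.
  by move=> /leq_sizeP/(_ b)-> //; rewrite coef0.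
have lt_a : (a < size (p`_b)%R)%N.
  by rewrite ltnNge; apply: contra nz_ab; rewrite /coefH => /leq_sizeP/(_ a)-> //.
apply: leq_trans (leq_bigmax (Ordinal lt_b)); rewrite /=.
by apply: leq_trans (leq_bigmax (Ordinal lt_a)); rewrite /= nz_ab.
Qed.

Lemma degH_le_degH p : degH_le q p (degH q p)%:Z.
Proof. by move=> a b /wtH_le_degH; rewrite lez_nat. Qed.

Lemma degH_leq p (d : nat) : degH_le q p d%:Z -> (degH q p <= d)%N.
Proof.
move=> le_pd; apply/bigmax_leqP => b _; apply/bigmax_leqP => a _.
by case: ifP => // /le_pd; rewrite lez_nat.
Qed.

Lemma degH_attained p : (0 < degH q p)%N ->
  exists a b, coefH p a b != 0 /\ wtH q a b = degH q p.
Proof.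
rewrite /degH; case: (posnP (size p)) => [->|/prednK <-]; first by rewrite big_ord0.
have [b ->] := bigop.eq_bigmax (fun b : 'I_(size p).-1.+1 =>
  \max_(a < size (p`_b)%R) (if coefH p a b != 0%R then wtH q a b else 0%N))
  (ltac:(by rewrite card_ord)).
case: (posnP (size (p`_b)%R)) => [->|/prednK <-]; first by rewrite big_ord0.
have [a ->] := bigop.eq_bigmax (fun a : 'I_(size (p`_b)%R).-1.+1 =>
  if coefH p a b != 0%R then wtH q a b else 0%N) (ltac:(by rewrite card_ord)).
by case: ifP => // nz_ab _; exists a, b.
Qed.

Lemma monicHD_small p p' t :
    monicH q p -> degH q p = t.+1 -> degH_le q p' t%:Z ->
  monicH q (p + p') /\ degH q (p + p') = t.+1.
Proof.
move=> [p_neq0 mon_p] deg_p le_p't.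
have coef_p'_top a b : (t < wtH q a b)%N -> coefH p' a b = 0.
  by move=> lt_tw; apply: contraTeq lt_tw => /le_p't; rewrite lez_nat -leqNgt.
have coef_top a b : wtH q a b = t.+1 -> coefH (p + p') a b = coefH p a b.
  by move=> w_ab; rewrite coefHD coef_p'_top ?addr0 // w_ab.
have := @degH_attained p; rewrite deg_p => /(_ isT) [a0 [b0 [nz_ab0 w_ab0]]].
have deg_pp' : degH q (p + p') = t.+1.
  apply/anti_leq/andP; split.
    apply: degH_leq; apply: degH_leD; first by rewrite -deg_p; apply: degH_le_degH.
    by apply: degH_leW le_p't; rewrite lez_nat.
  by rewrite -w_ab0 wtH_le_degH // coef_top.
split=> //; split.
  by apply: contraNneq nz_ab0 => pp'0; rewrite -coef_top // pp'0 coefH0.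
move=> a b; rewrite deg_pp' => nz_ab w_ab.
by rewrite coef_top // in nz_ab *; apply: mon_p; rewrite ?deg_p.
Qed.

End WeightedDegree.

(** * Reduction modulo H and modulo (H, G^s) *)

Lemma size_subr_leq (R : nzRingType) (p p' : {poly R}) k :
  (size p <= k.+1)%N -> (size p' <= k.+1)%N -> p`_k = p'`_k :> R ->
  (size (p - p')%R <= k)%N.
Proof.
move=> size_p size_p' eq_k; apply/leq_sizeP => j; rewrite leq_eqVlt.
case/orP=> [/eqP <-|lt_kj]; first by rewrite coefB eq_k subrr.
by rewrite coefB !nth_default ?subrr //; apply: leq_trans lt_kj.
Qed.

Section ReductionModH.
Variables (F : fieldType) (q : nat).
Hypothesis q_ge2 : (2 <= q)%N.
Local Notation H := (hermH F q).
Implicit Types (p : {poly {poly F}}) (d : int).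

Lemma hermHE : H = 'X^q + ('X - ('X^(q.+1))%:P).
Proof. by rewrite /hermH /hY /hX rmorphXn /= addrA. Qed.

Lemma size_hermH : size H = q.+1.
Proof. by rewrite hermHE size_polyDl size_polyXn // size_XsubC. Qed.

Lemma monic_hermH : H \is monic.
Proof.
by rewrite monicE hermHE lead_coefDl ?lead_coefXn // size_XsubC size_polyXn.
Qed.

Lemma coef_hermH_top : H`_q = 1.
Proof. by have := monicP monic_hermH; rewrite lead_coefE size_hermH. Qed.

Lemma hermH_neq0 : H != 0.
Proof. by rewrite -size_poly_eq0 size_hermH. Qed.

Lemma degH_le_hermH : degH_le q H (q * q.+1)%N%:Z.
Proof.
have -> : H = monoH F 0 q + monoH F 0 1 - monoH F q.+1 0.
  by rewrite /monoH !expr0 !mulr1 !mul1r /hermH /hX /hY rmorphXn expr1.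
by apply: degH_leB; first apply: degH_leD;
  (apply: degH_leW; last exact: degH_le_monoH); rewrite lez_nat /wtH; nia.
Qed.

Definition redH p := p %% H.

Lemma size_redH p : (size (redH p) <= q)%N.
Proof. by rewrite -ltnS -size_hermH ltn_modpN0 // hermH_neq0. Qed.

Lemma redH_eq p : p - redH p = (p %/ H) * H.
Proof. by rewrite {1}(Pdiv.IdomainMonic.divp_eq monic_hermH p) addrK. Qed.

Lemma redHB p p' : redH (p - p') = redH p - redH p'.
Proof.
have unit_lead : lead_coef H \is a GRing.unit.
  by rewrite (monicP monic_hermH) unitr1.
by rewrite /redH Pdiv.IdomainUnit.modpD // Pdiv.IdomainUnit.modpN.
Qed.

Lemma redH_subMH p c : redH (p - c * H) = redH p.
Proof. by rewrite redHB /redH modp_mull subr0. Qed.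

Lemma redH_small p : (size p <= q)%N -> redH p = p.
Proof. by move=> size_p; rewrite /redH modp_small // size_hermH ltnS. Qed.

(* q (q + 1) is the weight of Y^q. *)
Lemma degH_le_row_shift p d m :
  degH_le q p d -> degH_le q ((p`_(m + q))%:P * 'X^m) (d - (q * q.+1)%N%:Z).
Proof.
move=> le_pd a b; rewrite /coefH coefMXn; case: ltnP => [_|le_mb] /=.
  by rewrite coef0 eqxx.
rewrite coefC; case: (b - m =P 0)%N => [/eqP|_] /=; last by rewrite coef0 eqxx.
rewrite subn_eq0 => le_bm; have -> : b = m by apply/anti_leq/andP.
by move=> /le_pd; rewrite lerBrDr -PoszD /wtH mulnDl addnA.
Qed.

(* Reduction only rewrites Y^q as X^(q+1) - Y, whose terms have weight at
   most that of Y^q. *)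
Lemma degH_le_redH p d : degH_le q p d -> degH_le q (redH p) d.
Proof.
elim: (size p) {-2}p (leqnn (size p)) => [|n IHn] {}p size_p le_pd.
  by rewrite redH_small //; apply: leq_trans size_p _; lia.
have [le_pq|lt_qp] := leqP (size p) q; first by rewrite redH_small.
pose m := ((size p).-1 - q)%N.
have km : (m + q)%N = (size p).-1 by rewrite subnK //; lia.
rewrite -(redH_subMH p ((p`_(m + q))%:P * 'X^m)); apply: IHn.
  apply: leq_trans (_ : (size p).-1 <= n)%N; last by lia.
  rewrite -mulrA mul_polyC; apply: size_subr_leq; first by rewrite prednK //; lia.
    apply: leq_trans (size_scale_leq _ _) _.
    by rewrite mulrC size_mulXn ?hermH_neq0 // size_hermH; lia.
  rewrite coefZ coefXnM ifN; last by lia.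
  by rewrite -km addKn coef_hermH_top mulr1.
apply: degH_leB => //; rewrite -(subrK (q * q.+1)%N%:Z d).
exact: degH_leM (degH_le_row_shift (m := m) le_pd) degH_le_hermH.
Qed.

End ReductionModH.

Section ReductionModHG.
Variables (F : fieldType) (q s : nat).
Hypothesis q_ge2 : (2 <= q)%N.
Implicit Types (p : {poly {poly F}}).

(* G^s lies in F[X]; reducing each row of [redH p] modulo it yields the
   canonical representative of p modulo (H, G^s), supported on
   a < q^2 s and b < q. *)
Definition hermGs : {poly F} := ('X^(q ^ 2) - 'X) ^+ s.

Lemma hermG_expE : hermG F q ^+ s = hermGs%:P.
Proof. by rewrite /hermG /hX /hermGs rmorphXn rmorphB /= rmorphXn. Qed.

Lemma size_hermG1 : size ('X^(q ^ 2) - 'X : {poly F}) = (q ^ 2).+1.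
Proof. by rewrite size_polyDl ?size_polyXn // size_polyN size_polyX; nia. Qed.

Lemma hermGs_neq0 : hermGs != 0.
Proof. by rewrite expf_neq0 // -size_poly_eq0 size_hermG1. Qed.

Lemma size_hermGs : size hermGs = (q ^ 2 * s).+1.
Proof.
have := size_exp ('X^(q ^ 2) - 'X : {poly F}) s.
rewrite size_hermG1 /= => <-.
by rewrite prednK // size_poly_gt0; apply: hermGs_neq0.
Qed.

Definition redHG p : {poly {poly F}} := \poly_(j < q) ((redH q p)`_j %% hermGs).

Lemma congR_redHG p : congR q s p (redHG p).
Proof.
exists (\poly_(j < q) ((redH q p)`_j %/ hermGs)), (p %/ hermH F q).
rewrite -redH_eq // hermG_expE -[p - _](subrKA (redH q p)) addrC.
congr (_ + _); apply/polyP => j; rewrite coefB coefMC !coef_poly.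
case: ltnP => lt_jq; first by rewrite {1}(divp_eq (redH q p)`_j hermGs) addrK.
by rewrite nth_default ?subr0 ?mul0r //; apply: leq_trans lt_jq; apply: size_redH.
Qed.

Lemma redHGB p p' : redHG (p - p') = redHG p - redHG p'.
Proof.
apply/polyP => j; rewrite coefB !coef_poly; case: ifP => _; last by rewrite subr0.
by rewrite redHB // coefB modpD modNp.
Qed.

Lemma redHG_eq0 p :
    (forall a b, (a < q ^ 2 * s)%N -> (b < q)%N -> coefH (redHG p) a b = 0) ->
  redHG p = 0.
Proof.
move=> low0; apply: coefH_ext => a b; rewrite coefH0.
have [lt_bq|le_qb] := ltnP b q; last by rewrite /coefH coef_poly ltnNge le_qb coef0.
have [lt_a|le_a] := ltnP a (q ^ 2 * s); first exact: low0.
rewrite /coefH coef_poly lt_bq nth_default //; apply: leq_trans le_a.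
by rewrite -ltnS -size_hermGs ltn_modp hermGs_neq0.
Qed.

End ReductionModHG.

Section Congruences.
Variables (F : fieldType) (q k : nat).
Implicit Types (p : {poly {poly F}}).

Lemma eqR_redH p : (2 <= q)%N -> eqR q (redH q p) p.
Proof. by move=> q_ge2; exists (- (p %/ hermH F q)); rewrite -opprB redH_eq // mulNr. Qed.

Lemma eqRD p1 p2 p1' p2' :
  eqR q p1 p1' -> eqR q p2 p2' -> eqR q (p1 + p2) (p1' + p2').
Proof.
move=> [c1 e1] [c2 e2]; exists (c1 + c2).
by rewrite mulrDl -e1 -e2 opprD addrACA.
Qed.

Lemma congRD p1 p2 p1' p2' :
  congR q k p1 p1' -> congR q k p2 p2' -> congR q k (p1 + p2) (p1' + p2').
Proof.
move=> [c1 [d1 e1]] [c2 [d2 e2]]; exists (c1 + c2), (d1 + d2).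
by rewrite !mulrDl addrACA -e1 -e2 opprD addrACA.
Qed.

Lemma congR_subr0 p p' : congR q k (p - p') 0 -> congR q k p p'.
Proof. by rewrite /congR subr0. Qed.

End Congruences.

Lemma sum_ltn_minn B c : (\sum_(a < B) (a < c : nat) = minn B c)%N.
Proof.
elim: B => [|B IHB]; first by rewrite big_ord0 min0n.
by rewrite big_ord_recr /= IHB; case: (ltnP B c) => ?; lia.
Qed.

Lemma sum_ltn_rows A K m : (K <= A)%N ->
  (\sum_(a < A) \sum_(b < m) (a < K : nat) = m * K)%N.
Proof.
move=> le_KA; rewrite (eq_bigr (fun a : 'I_A => m * (a < K))%N) => [|a _].
  by rewrite -big_distrr /= sum_ltn_minn (minn_idPr le_KA).
by rewrite sum_nat_const card_ord.
Qed.

Lemma card_set_sum (T : finType) (P : pred T) :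
  #|[set x | P x]| = (\sum_x (P x : nat))%N.
Proof. by rewrite -sum1dep_card big_mkcond /=; apply: eq_bigr => x _; case: (P x). Qed.

Lemma card_sig_triple (T1 T2 T3 : finType) (P : pred (T1 * T2 * T3)) :
  #|{: {x | P x}}| = (\sum_x1 \sum_x2 \sum_x3 (P (x1, x2, x3) : nat))%N.
Proof.
rewrite card_sig -cardsE card_set_sum pair_big pair_big /=.
by apply: eq_bigr => -[[]].
Qed.

Lemma card_ker_additive (I J : finType) (K : finZmodType)
    (f : {ffun I -> K} -> {ffun J -> K}) :
    (forall u v, f (u - v) = f u - f v) ->
  (#|K| ^ #|I| <= #|K| ^ #|J| * #|[set u | f u == 0%R]|)%N.
Proof.
move=> fB; pose rep v := odflt 0 [pick u | f u == v].
have f_rep u : f (rep (f u)) = f u.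
  by rewrite /rep; case: pickP => [u' /eqP //|/(_ u)]; rewrite eqxx.
pose g u := (f u, u - rep (f u)).
have g_inj : injective g by move=> u u' [e]; rewrite e => /addIr.
rewrite -!card_ffun -cardsT -(card_imset _ g_inj) -cardsT -cardsX.
apply: subset_leq_card; apply/subsetP => _ /imsetP[u _ ->].
by rewrite in_setX !inE fB f_rep subrr eqxx.
Qed.

Lemma ord_injection_in (T : finType) (A : {set T}) n : (n <= #|A|)%N ->
  exists f : 'I_n -> T, injective f /\ forall k, f k \in A.
Proof.
move=> le_nA; exists (fun k => enum_val (widen_ord le_nA k)); split.
  by move=> k k' /enum_val_inj [] /val_inj.
by move=> k; apply: enum_valP.
Qed.

(** * Monomials of bounded weight *)

Lemma genusE q : genus q = 'C(q, 2).
Proof. by rewrite bin2 /genus -divn2 subn1. Qed.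

Lemma genus_gt0 q : (1 < q)%N -> (0 < genus q)%N.
Proof. by rewrite genusE bin_gt0. Qed.

Lemma wtH_inj q a b a' b' : (b < q)%N -> (b' < q)%N ->
  wtH q a b = wtH q a' b' -> a = a' /\ b = b'.
Proof.
move=> lt_bq lt_b'q; have q_gt0 : (0 < q)%N by lia.
have wtE x y : (x * q + y * q.+1 = (x + y) * q + y)%N by nia.
move=> e; have eb : b = b'.
  by move: (congr1 (modn^~ q) e); rewrite /wtH !wtE !modnMDl !modn_small.
by split=> //; move: e; rewrite /wtH eb => /addIn /eqP; rewrite eqn_pmul2r // => /eqP.
Qed.

Section WeightCount.
Local Open Scope nat_scope.
Variable q : nat.
Hypothesis q_gt0 : 0 < q.

(* The Riemann-Roch bound l(m P_oo) >= m + 1 - g: writing m = M q + r, the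
   row Y^b (b < q) contains at least M - b + [b <= r] monomials of weight
   <= m, and these sum to m + 1 - 'C(q, 2). *)
Lemma count_wtH_le_nat B m : m < B ->
  m.+1 <= \sum_(a < B) \sum_(b < q) (wtH q a b <= m : nat) + genus q.
Proof.
move=> lt_mB; set M := m %/ q; set r := m %% q.
have mE : m = M * q + r by rewrite /M /r -divn_eq.
have lt_rq : r < q by rewrite ltn_mod.
have row_count (b : 'I_q) :
    M + (b <= r) - b <= \sum_(a < B) (wtH q a b <= m : nat).
  have -> : M + (b <= r) - b = \sum_(a < B) (a < M + (b <= r) - b : nat).
    rewrite sum_ltn_minn; apply/esym/minn_idPr.
    have : M <= m by rewrite /M leq_div.
    by case: (b <= r); lia.
  apply: leq_sum => a _; case: ltnP => //= lt_a; rewrite lt0b /wtH mE.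
  by have := ltn_ord b; case: (leqP b r) => le_br; rewrite ?le_br /= in lt_a; nia.
rewrite exchange_big /= genusE -bin2_sum big_mkord.
apply: leq_trans _ (leq_add (leq_sum _ (fun b _ => row_count b)) (leqnn _)).
rewrite -big_split /=; apply: leq_trans (_ : \sum_(b < q) (M + (b <= r)) <= _).
  rewrite big_split /= sum_nat_const card_ord.
  have -> : \sum_(b < q) (b <= r : nat) = r.+1.
    by rewrite (eq_bigr (fun b : 'I_q => (b < r.+1 : nat))) // sum_ltn_minn; lia.
  by rewrite mE; nia.
by apply: leq_sum => b _; lia.
Qed.

Lemma count_wtH_le B m : m < B ->
  (m%:Z + 1 - (genus q)%:Z <= (\sum_(a < B) \sum_(b < q) (wtH q a b <= m : nat))%:Z)%R.
Proof.
move/count_wtH_le_nat; move: (genus q) (\sum_(a < B) _) => g N; lia.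
Qed.

Lemma count_wtH_window B L D :
  \sum_(a < B) \sum_(b < q) (L < wtH q a b <= D : nat) <= D - L.
Proof.
rewrite pair_big /= -card_set_sum.
set A := [set x : 'I_B * 'I_q | L < wtH q x.1 x.2 <= D].
pose f (x : 'I_B * 'I_q) : 'I_(D - L).+1 := inord (wtH q x.1 x.2 - L.+1).
have f_inj : {in A &, injective f}.
  move=> [a b] [a' b']; rewrite !inE /= => /andP[? ?] /andP[? ?].
  move/(congr1 val); rewrite /f /= !inordK; try lia.
  move=> e; have e_wt : wtH q a b = wtH q a' b' by lia.
  by have [/val_inj -> /val_inj ->] := wtH_inj (ltn_ord b) (ltn_ord b') e_wt.
have f_A : f @: A \subset [set i : 'I_(D - L).+1 | i < D - L].
  apply/subsetP => _ /imsetP[[a b] + ->]; rewrite !inE /f /= => /andP[? ?].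
  by rewrite inordK; lia.
rewrite -(card_in_imset f_inj); apply: leq_trans (subset_leq_card f_A) _.
by rewrite card_set_sum sum_ltn_minn; lia.
Qed.

End WeightCount.

Lemma msum_mzero h l : msum (mzero h l) = 0%N.
Proof. by rewrite /msum big1 // => mu _; rewrite ffunE. Qed.

Lemma msum_eq0 h l (k : midx h l) : msum k = 0%N -> k = mzero h l.
Proof.
move/eqP; rewrite /msum sum_nat_eq0 => /forallP k0.
by apply/ffunP => mu; rewrite ffunE; apply: val_inj; apply/eqP; apply: k0.
Qed.

Lemma msum_le h l (i j : midx h l) : mle i j -> (msum i <= msum j)%N.
Proof. by move/forallP => le_ij; apply: leq_sum => mu _; apply: le_ij. Qed.

Lemma msum_subE h l (i j : midx h l) :
  mle i j -> (\sum_mu (j mu - i mu : nat))%N = (msum j - msum i)%N.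
Proof.
move/forallP => le_ij; rewrite /msum -[in RHS](eq_bigr _ (fun mu _ => subnK (le_ij mu))).
by rewrite big_split /= addnK.
Qed.

Lemma degH_le_hermG (F : fieldType) q : degH_le q (hermG F q) (q ^ 3)%N%:Z.
Proof.
have -> : hermG F q = monoH F (q ^ 2) 0 - monoH F 1 0.
  by rewrite /hermG /monoH /hX !expr0 !mulr1 rmorphXn expr1.
by apply: degH_leB; (apply: degH_leW; last exact: degH_le_monoH);
  rewrite lez_nat /wtH; nia.
Qed.

Lemma degH_le_Aij (F : fieldType) q h l (Rv : 'I_h -> {poly {poly F}})
    (i j : midx h l) (d : int) :
    (forall mu, degH_le q (Rv mu) d) -> mle i j ->
  degH_le q (Aij q Rv i j) ((msum j - msum i)%N%:Z * d + (msum i)%:Z * (q ^ 3)%N%:Z).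
Proof.
move=> le_Rd le_ij; rewrite /Aij le_ij -[X in degH_le _ _ (X + _)]add0r.
apply: degH_leM; last exact: degH_leX (@degH_le_hermG F q).
apply: degH_leM; first exact: degH_le_nat.
rewrite -msum_subE // (big_morph Posz PoszD (erefl _)) mulr_suml.
by apply: degH_le_prod => mu _; apply: degH_leX.
Qed.

(** * The perturbation space *)

Section Perturbation.
Variables (F : finFieldType) (q h mH tau l s : nat) (Rv : 'I_h -> {poly {poly F}}).
Hypotheses (q_ge2 : (2 <= q)%N) (tau_gt0 : (0 < tau)%N) (s_gt0 : (0 < s)%N)
  (le_sl : (s <= l)%N) (lt_mH_n : (mH < q ^ 3)%N).

(* The perturbation at index k: for |k| < s it is added to lambda_k (with
   weight < tau at k = 0, so that the leading monomial of lambda_0 survives),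
   for s <= |k| <= l it is added to psi_k. *)
Definition budget (k : midx h l) : nat :=
  if msum k == 0%N then tau.-1
  else if (msum k < s)%N then (tau + msum k * (2 * genus q - 1))%N
  else (tau + msum k * mH)%N.

(* Exponent bounds on X large enough to contain every monomial of weight at
   most [budget k], resp. [wmax j] and q^2 s. *)
Definition BI := (tau + l * (mH + 2 * genus q)).+1.
Definition BJ := (tau + l * (q ^ 3 + 2 * genus q) + q ^ 2 * s).+1.

Definition wmin (j : midx h l) := (tau + msum j * mH)%N.
Definition wmax (j : midx h l) := (tau + msum j * (q ^ 3 + 2 * genus q - 1))%N.

Definition is_unknown (x : midx h l * 'I_BI * 'I_q) : bool :=
  (msum x.1.1 <= l)%N && (wtH q x.1.2 x.2 <= budget x.1.1)%N.
Definition unknown := {x | is_unknown x}.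

Definition is_equation (y : midx h l * 'I_BJ * 'I_q) : bool :=
  (1 <= msum y.1.1 <= l)%N &&
  (if (msum y.1.1 < s)%N then (wmin y.1.1 < wtH q y.1.2 y.2 <= wmax y.1.1)%N
   else (y.1.2 < q ^ 2 * s)%N).
Definition equation := {y | is_equation y}.

Definition vcoef (v : {ffun unknown -> F}) (k : midx h l) (a b : nat) : F :=
  if insub a : option 'I_BI is Some a' then
    if insub b : option 'I_q is Some b' then
      if insub (k, a', b') : option unknown is Some x then v x else 0
  else 0 else 0.

Definition pert (v : {ffun unknown -> F}) (k : midx h l) : {poly {poly F}} :=
  \poly_(b < q) \poly_(a < BI) vcoef v k a b.

Definition lamA (lam : midx h l -> {poly {poly F}}) (j : midx h l) :=
  \sum_(i : midx h l | (msum i < s)%N) lam i * Aij q Rv i j.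

(* The equations express that, once psi_j := psi_j + redH (lamA (pert v) j)
   for |j| < s, the new psi_j keeps its weight bound, and that
   pert v j = lamA (pert v) j modulo (H, G^s) for |j| >= s. *)
Definition constraints (v : {ffun unknown -> F}) : {ffun equation -> F} :=
  [ffun y : equation => let: (j, a, b) := val y in
    if (msum j < s)%N then coefH (redH q (lamA (pert v) j)) a b
    else coefH (redHG q s (pert v j - lamA (pert v) j)) a b].

Lemma vcoefE v (x : unknown) : vcoef v (val x).1.1 (val x).1.2 (val x).2 = v x.
Proof. by case: x => [[[k a] b] ux]; rewrite /vcoef /= !valK insubT. Qed.

Lemma vcoefB v w k a b : vcoef (v - w) k a b = vcoef v k a b - vcoef w k a b.
Proof.
rewrite /vcoef; case: insub => [a'|]; last by rewrite subr0.
case: insub => [b'|]; last by rewrite subr0.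
by case: insub => [x|]; rewrite ?ffunE ?subr0.
Qed.

Lemma vcoef_neq0 v k a b : vcoef v k a b != 0 ->
  exists (a' : 'I_BI) (b' : 'I_q), [/\ val a' = a, val b' = b & is_unknown (k, a', b')].
Proof.
rewrite /vcoef; case: insubP => [a' _ <-|]; last by rewrite eqxx.
case: insubP => [b' _ <-|]; last by rewrite eqxx.
by case: insubP => [x ux _ _|]; [exists a', b' | rewrite eqxx].
Qed.

Lemma coefH_pert v k a b : coefH (pert v k) a b = vcoef v k a b.
Proof.
rewrite /coefH coef_poly; case: ltnP => lt_bq; last first.
  by rewrite coef0 /vcoef; case: insub => // a'; rewrite insubF // ltnNge lt_bq.
by rewrite coef_poly; case: ltnP => // le_a; rewrite /vcoef insubF // ltnNge le_a.
Qed.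

Lemma pertB v w k : pert (v - w) k = pert v k - pert w k.
Proof. by apply: coefH_ext => a b; rewrite coefHB !coefH_pert vcoefB. Qed.

Lemma degH_le_pert v k : degH_le q (pert v k) (budget k)%:Z.
Proof.
move=> a b; rewrite coefH_pert => /vcoef_neq0[a' [b' [<- <- /andP[_]]]].
by rewrite lez_nat.
Qed.

Lemma lamAD lam lam' j :
  lamA (fun i => lam i + lam' i) j = lamA lam j + lamA lam' j.
Proof. by rewrite /lamA -big_split; apply: eq_bigr => i _; rewrite mulrDl. Qed.

Lemma lamA_pertB v w j : lamA (pert (v - w)) j = lamA (pert v) j - lamA (pert w) j.
Proof. by rewrite /lamA -sumrB; apply: eq_bigr => i _; rewrite pertB mulrBl. Qed.

Lemma constraintsB v w : constraints (v - w) = constraints v - constraints w.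
Proof.
apply/ffunP => y; rewrite !ffunE; case: y => [[[j a] b] ey] /=.
rewrite lamA_pertB.
case: ifP => _; first by rewrite redHB // coefHB.
by rewrite pertB -coefHB -redHGB //; congr (coefH (redHG _ _ _) _ _); ring.
Qed.

Definition nunknown (k : midx h l) : nat :=
  if (msum k <= l)%N then \sum_(a < BI) \sum_(b < q) (wtH q a b <= budget k : nat)
  else 0%N.

Definition nequation (k : midx h l) : nat :=
  if (1 <= msum k <= l)%N then
    if (msum k < s)%N then \sum_(a < BJ) \sum_(b < q) (wmin k < wtH q a b <= wmax k : nat)
    else \sum_(a < BJ) \sum_(b < q) (a < q ^ 2 * s : nat)
  else 0%N.

Lemma card_unknown : #|{: unknown}| = (\sum_k nunknown k)%N.
Proof.
rewrite card_sig_triple; apply: eq_bigr => k _; rewrite /nunknown /is_unknown /=.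
by case: leqP => //= _; rewrite big1 // => a _; rewrite big1.
Qed.

Lemma card_equation : #|{: equation}| = (\sum_k nequation k)%N.
Proof.
rewrite card_sig_triple; apply: eq_bigr => k _; rewrite /nequation /is_equation /=.
case: (1 <= msum k <= l)%N; last by rewrite big1 // => a _; rewrite big1.
by case: (msum k < s)%N.
Qed.

Lemma budget_lt_BI k : (msum k <= l)%N -> (budget k < BI)%N.
Proof.
move=> le_kl; rewrite /budget /BI ltnS.
case: ifP => _; first lia.
by case: ifP => _; rewrite leq_add2l leq_mul //; lia.
Qed.

Lemma nunknown_ge k : (msum k <= l)%N ->
  (budget k)%:Z + 1 - (genus q)%:Z <= (nunknown k)%:Z.
Proof.
move=> le_kl; rewrite /nunknown le_kl.
by apply: count_wtH_le; [lia | apply: budget_lt_BI].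
Qed.

Definition delta_term (k : midx h l) : int :=
  let le_l := ((msum k <= l)%N : nat)%:Z in
  let lt_s := ((msum k < s)%N : nat)%:Z in
  tau.+1%:Z * le_l
  - (q ^ 3)%N%:Z * ((if (msum k < s)%N then msum k else 0%N)%:Z
                    + s%:Z * le_l - s%:Z * lt_s)
  + mH%:Z * (if (msum k <= l)%N then msum k else 0%N)%:Z
  - (genus q)%:Z * le_l.

Lemma delta_term_out k : (l < msum k)%N ->
  delta_term k - (k == mzero h l : nat)%:Z <= (nunknown k)%:Z - (nequation k)%:Z.
Proof.
move=> lt_lk; have k_neq0 : k != mzero h l.
  by apply: contraTneq lt_lk => ->; rewrite msum_mzero.
rewrite /delta_term /nunknown /nequation /= (negbTE k_neq0).
have [-> ->] : (msum k <= l)%N = false /\ (msum k < s)%N = false by split; lia.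
by rewrite andbF /=; lia.
Qed.

Lemma delta_term_mzero :
  delta_term (mzero h l) - 1 <= (nunknown (mzero h l))%:Z - (nequation (mzero h l))%:Z.
Proof.
have := nunknown_ge (k := mzero h l); rewrite /delta_term /nequation /budget msum_mzero.
by rewrite s_gt0 /=; move: (genus q) (nunknown _) => g N; lia.
Qed.

Lemma delta_term_low k : (0 < msum k < s)%N ->
  delta_term k <= (nunknown k)%:Z - (nequation k)%:Z.
Proof.
case/andP=> k_gt0 lt_ks; have le_kl : (msum k <= l)%N by lia.
have := nunknown_ge le_kl.
have := count_wtH_window (ltnW q_ge2) BJ (wmin k) (wmax k).
rewrite /delta_term /nequation /budget /wmin /wmax /= le_kl lt_ks k_gt0 ifF; last lia.
move: (msum k) (genus q) (nunknown k) (\sum_(a < BJ) _)%N (genus_gt0 q_ge2) lt_mH_n k_gt0.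
move=> x g N J /=; move: (q ^ 3)%N => n; nia.
Qed.

Lemma delta_term_high k : (s <= msum k <= l)%N ->
  delta_term k <= (nunknown k)%:Z - (nequation k)%:Z.
Proof.
case/andP=> le_sk le_kl; have := nunknown_ge le_kl.
rewrite /delta_term /nequation /budget /= le_kl ltnNge le_sk /= ifF; last lia.
rewrite (leq_trans s_gt0 le_sk) sum_ltn_rows; last by rewrite /BJ; lia.
rewrite mulnA -expnS.
move: (msum k) (genus q) (nunknown k) (q ^ 3)%N => x g N n /=; lia.
Qed.

Lemma delta_term_le k :
  delta_term k - (k == mzero h l : nat)%:Z <= (nunknown k)%:Z - (nequation k)%:Z.
Proof.
have [lt_lk|le_kl] := ltnP l (msum k); first exact: delta_term_out.
have [/msum_eq0 ->|k_gt0] := posnP (msum k); first by rewrite eqxx delta_term_mzero.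
have -> : (k == mzero h l) = false.
  by apply/negbTE; apply: contraTneq k_gt0 => ->; rewrite msum_mzero.
rewrite subr0; have [lt_ks|le_sk] := ltnP (msum k) s.
  by apply: delta_term_low; rewrite k_gt0.
by apply: delta_term_high; rewrite le_sk.
Qed.

Lemma delta_sum : delta q h mH l s tau = \sum_k delta_term k.
Proof.
rewrite /delta /Cle /Clt !card_set_sum /Wlt /Wle.
rewrite (big_mkcond (fun i => msum i < s)%N) (big_mkcond (fun i => msum i <= l)%N).
rewrite !(big_morph Posz PoszD (erefl 0%:Z)) /delta_term /=.
by rewrite sumrB big_split sumrB /= -!mulr_sumr sumrB big_split /= -!mulr_sumr.
Qed.

Lemma delta_le_card :
  delta q h mH l s tau - 1 <= #|{: unknown}|%:Z - #|{: equation}|%:Z.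
Proof.
rewrite card_unknown card_equation !(big_morph Posz PoszD (erefl 0%:Z)) -sumrB.
have -> : 1 = \sum_k (k == mzero h l : nat)%:Z.
  by rewrite -(big_morph Posz PoszD (erefl 0%:Z)) -big_mkcond /= big_pred1_eq.
by rewrite delta_sum -sumrB; apply: ler_sum => k _; apply: delta_term_le.
Qed.

Hypothesis deg_Rv : forall mu, degH_le q (Rv mu) ((q ^ 3 + 2 * genus q)%N%:Z - 1).

Lemma degH_le_lamA_pert v j : degH_le q (lamA (pert v) j) (wmax j)%:Z.
Proof.
apply: degH_le_sum => i lt_is; have [le_ij|] := boolP (mle i j); last first.
  by rewrite /Aij => /negbTE ->; rewrite mulr0; apply: degH_le0.
apply: degH_leW (degH_leM (degH_le_pert (v := v) (k := i)) (degH_le_Aij deg_Rv le_ij)).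
have := msum_le le_ij; have := genus_gt0 q_ge2; rewrite /budget /wmax lt_is.
move: (msum i) (msum j) (genus q) (q ^ 3)%N => x y g n le_xy g_gt0.
by case: eqP => [->|x_neq0]; nia.
Qed.

Definition lam_pert (lam : midx h l -> {poly {poly F}}) v i := lam i + pert v i.
Definition psi_pert (psi : midx h l -> {poly {poly F}}) v j :=
  psi j + (if (msum j < s)%N then redH q (lamA (pert v) j) else pert v j).

Section Kernel.
Variable v : {ffun unknown -> F}.
Hypothesis v_ker : constraints v = 0.

Lemma constraint_eq0 j (a : 'I_BJ) (b : 'I_q) : is_equation (j, a, b) ->
  (if (msum j < s)%N then coefH (redH q (lamA (pert v) j)) a b
   else coefH (redHG q s (pert v j - lamA (pert v) j)) a b) = 0.
Proof. by move=> ej; move/ffunP/(_ (exist is_equation _ ej)): v_ker; rewrite !ffunE. Qed.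

Lemma redHG_pert_eq0 j : (s <= msum j <= l)%N ->
  redHG q s (pert v j - lamA (pert v) j) = 0.
Proof.
case/andP=> le_sj le_jl; apply: redHG_eq0 => // a b lt_a lt_b.
have lt_aBJ : (a < BJ)%N by rewrite /BJ; lia.
have := constraint_eq0 (j := j) (a := Ordinal lt_aBJ) (b := Ordinal lt_b).
rewrite /is_equation /= le_jl lt_a (leq_trans s_gt0 le_sj).
have -> : (msum j < s)%N = false by rewrite ltnNge le_sj.
by move/(_ isT).
Qed.

Lemma degH_le_redH_lamA j : (1 <= msum j < s)%N ->
  degH_le q (redH q (lamA (pert v) j)) (wmin j)%:Z.
Proof.
case/andP=> j_gt0 lt_js a b nz_ab.
have lt_bq : (b < q)%N.
  rewrite ltnNge; apply: contra nz_ab; rewrite /coefH.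
  by move=> /(leq_trans (size_redH q_ge2 _)) /leq_sizeP/(_ b (leqnn b)) ->; rewrite coef0.
have := degH_le_redH q_ge2 (degH_le_lamA_pert (v := v) (j := j)) nz_ab.
rewrite lez_nat => le_w.
have lt_aBJ : (a < BJ)%N.
  have : (msum j * (q ^ 3 + 2 * genus q - 1) <= l * (q ^ 3 + 2 * genus q))%N.
    by apply: leq_mul; lia.
  by move: le_w; rewrite /wtH /wmax /BJ; nia.
rewrite lez_nat leqNgt; apply: contra nz_ab => lt_w.
have := constraint_eq0 (j := j) (a := Ordinal lt_aBJ) (b := Ordinal lt_bq).
rewrite /is_equation /= lt_js j_gt0 lt_w le_w (leq_trans (ltnW lt_js) le_sl).
by move=> /(_ isT)->.
Qed.

Variables (lam psi : midx h l -> {poly {poly F}}).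
Hypotheses (sol : is_solution q mH s Rv lam psi)
  (deg_lam0 : degH q (lam (mzero h l)) = tau).

Lemma lam_pert_mzero :
  monicH q (lam_pert lam v (mzero h l)) /\ degH q (lam_pert lam v (mzero h l)) = tau.
Proof.
case: sol => _ mon_lam0 _ _ _; have deg := deg_lam0.
rewrite -(prednK tau_gt0) in deg *; apply: monicHD_small mon_lam0 deg _.
by have := degH_le_pert (v := v) (k := mzero h l); rewrite /budget msum_mzero.
Qed.

Lemma reducedH_pert :
  (forall i, (msum i < s)%N -> reducedH q (lam_pert lam v i)) /\
  (forall j, (1 <= msum j <= l)%N -> reducedH q (psi_pert psi v j)).
Proof.
case: sol => -[red_lam red_psi] _ _ _ _; split=> [i lt_is | j j_in].
  apply: leq_trans (size_polyD _ _) _.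
  by rewrite geq_max red_lam //; apply: size_poly.
apply: leq_trans (size_polyD _ _) _; rewrite geq_max red_psi //.
by case: ifP => _; [apply: size_redH | apply: size_poly].
Qed.

Lemma psi_pert_congr :
  (forall j, (1 <= msum j < s)%N ->
     eqR q (psi_pert psi v j) (lamA (lam_pert lam v) j)) /\
  (forall j, (s <= msum j <= l)%N ->
     congR q s (psi_pert psi v j) (lamA (lam_pert lam v) j)).
Proof.
case: sol => _ _ [eq_psi cong_psi] _ _; split=> [j j_in | j j_in].
  rewrite /psi_pert lamAD; case/andP: (j_in) => _ ->.
  by apply: eqRD; [apply: eq_psi | apply: eqR_redH].
rewrite /psi_pert lamAD ifF; last by case/andP: j_in => le_sj _; rewrite ltnNge le_sj.
apply: congRD; first exact: cong_psi.
by apply: congR_subr0; rewrite -(redHG_pert_eq0 j_in); apply: congR_redHG.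
Qed.

Lemma degH_le_lam_pert i : (msum i < s)%N ->
  degH_le q (lam_pert lam v i)
    ((degH q (lam_pert lam v (mzero h l)))%:Z + (msum i)%:Z * (2 * (genus q)%:Z - 1)).
Proof.
case: sol => _ _ _ deg_lam _ lt_is; have [_ ->] := lam_pert_mzero.
apply: degH_leD; first by rewrite -deg_lam0; apply: deg_lam.
apply: degH_leW (degH_le_pert (v := v) (k := i)); rewrite /budget lt_is.
by have := genus_gt0 q_ge2; case: eqP => [->|_]; rewrite ?PoszD ?PoszM; lia.
Qed.

Lemma degH_le_psi_pert j : (1 <= msum j <= l)%N ->
  degH_le q (psi_pert psi v j)
    ((degH q (lam_pert lam v (mzero h l)))%:Z + (msum j)%:Z * mH%:Z).
Proof.
case: sol => _ _ _ _ deg_psi j_in; have [_ ->] := lam_pert_mzero.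
apply: degH_leD; first by rewrite -deg_lam0; apply: deg_psi.
case: ifP => lt_js; first by apply: degH_le_redH_lamA; case/andP: j_in => ->.
apply: degH_leW (degH_le_pert (v := v) (k := j)); rewrite /budget lt_js.
by case/andP: j_in; case: eqP => [->|_] //; rewrite PoszD PoszM.
Qed.

Lemma pert_is_solution :
  is_solution q mH s Rv (lam_pert lam v) (psi_pert psi v) /\
  sol_degree q (lam_pert lam v) = tau.
Proof.
have [mon deg] := lam_pert_mzero; split=> //; split.
- exact: reducedH_pert.
- exact: mon.
- exact: psi_pert_congr.
- exact: degH_le_lam_pert.
- exact: degH_le_psi_pert.
Qed.

End Kernel.

Lemma pert_inj lam psi v w :
    (forall i, (msum i < s)%N -> lam_pert lam v i = lam_pert lam w i) ->
    (forall j, (1 <= msum j <= l)%N -> psi_pert psi v j = psi_pert psi w j) ->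
  v = w.
Proof.
move=> eq_lam eq_psi; apply/ffunP => x; rewrite -(vcoefE v x) -(vcoefE w x) -!coefH_pert.
have /andP[le_xl _] := valP x; have [lt_xs|le_sx] := ltnP (msum (val x).1.1) s.
  by have := eq_lam _ lt_xs; rewrite /lam_pert => /addrI ->.
have x_in : (1 <= msum (val x).1.1 <= l)%N by rewrite le_xl (leq_trans s_gt0 le_sx).
by move: (eq_psi _ x_in); rewrite /psi_pert ltnNge le_sx => /addrI ->.
Qed.

Lemma card_kernel e : #|F| = (q ^ 2)%N -> e%:Z <= delta q h mH l s tau - 1 ->
  ((q ^ 2) ^ e <= #|[set v | constraints v == 0%R]|)%N.
Proof.
move=> card_F le_e; have q2_gt0 : (0 < q ^ 2)%N by rewrite expn_gt0; lia.
have pow_gt0 : (0 < (q ^ 2) ^ #|{: equation}|)%N by rewrite expn_gt0 q2_gt0.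
rewrite -(leq_pmul2l pow_gt0) -expnD.
rewrite -card_F; apply: leq_trans (card_ker_additive constraintsB).
rewrite leq_pexp2l ?card_F //.
move: le_e delta_le_card; rewrite -lez_nat PoszD.
by move: (delta _ _ _ _ _ _) #|{: unknown}| #|{: equation}| => d U E; lia.
Qed.

End Perturbation.

Unset Implicit Arguments.

Theorem lemma6 (F : finFieldType) (q h mH tau l s : nat)
  (P : 'I_(q ^ 3) -> F * F) (r : 'I_h -> 'I_(q ^ 3) -> F)
  (Rv : 'I_h -> {poly {poly F}}) :
  #|F| = (q ^ 2)%N ->
  (0 < h)%N ->
  injective P ->
  (forall k, on_curve q (P k)) ->
  (forall x : F * F, on_curve q x -> exists k, P k = x) ->
  (2 * (genus q - 1) < mH < q ^ 3)%N ->
  (forall mu, reducedH q (Rv mu) /\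
              degH_le q (Rv mu) ((q ^ 3 + 2 * genus q)%N%:Z - 1)) ->
  (forall mu k, evalH (Rv mu) (P k) = r mu k) ->
  (0 < tau)%N -> (0 < l)%N -> (0 < s)%N -> (s <= l)%N ->
  (tau + l * mH < s * q ^ 3)%N ->
  (exists lam psi : midx h l -> {poly {poly F}},
      is_solution q mH s Rv lam psi /\ sol_degree q lam = tau) ->
  forall e : nat, e%:Z <= delta q h mH l s tau - 1 ->
  exists sol : 'I_((q ^ 2) ^ e) ->
               (midx h l -> {poly {poly F}}) * (midx h l -> {poly {poly F}}),
    (forall k, is_solution q mH s Rv (sol k).1 (sol k).2 /\
               sol_degree q (sol k).1 = tau) /\
    (forall k k',
        (forall i, (msum i < s)%N -> (sol k).1 i = (sol k').1 i) ->
        (forall j, (1 <= msum j <= l)%N -> (sol k).2 j = (sol k').2 j) ->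
        k = k').
Proof.
move=> card_F _ _ _ _ /andP[_ lt_mH_n] deg_Rv _ tau_gt0 _ s_gt0 le_sl _
  [lam [psi [sol deg_lam0]]] e le_e.
have q_ge2 : (2 <= q)%N.
  by have := card_finNzRing_gt1 F; rewrite card_F; nia.
have deg_Rv' mu := (deg_Rv mu).2.
have [f [f_inj f_ker]] := ord_injection_in
  (card_kernel Rv q_ge2 tau_gt0 s_gt0 le_sl lt_mH_n card_F le_e).
exists (fun k => (lam_pert lam (f k), psi_pert Rv psi (f k))); split.
  move=> k /=; have := f_ker k; rewrite inE => /eqP ker_fk.
  exact: (pert_is_solution q_ge2 tau_gt0 s_gt0 le_sl lt_mH_n deg_Rv' ker_fk sol deg_lam0).
by move=> k k' /= eq_lam eq_psi; apply: f_inj; apply: (pert_inj s_gt0 eq_lam eq_psi).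
Qed.
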